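(* Let $\Gamma$ be a MaxSAT instance encoded with blocking variables, with $\mathrm{cost}(\Gamma)=k$, and let $A$ be the set of total assignments $\alpha$ with $\alpha\models\Gamma$ and $\mathrm{cost}(\alpha)=k$. Suppose (1) every two distinct assignments in $A$ have Hamming distance at least $d$, and (2) for every blocking variable $b$ there are $\alpha,\beta\in A$ with $\alpha(b)=0$ and $\beta(b)=1$. Then every derivation in the cost-SR calculus from $\Gamma$ that derives a unit clause $b$ for some blocking variable $b$ contains a clause $C$ introduced by the cost-SR rule whose witnessing substitution $\sigma$ satisfies $\mathrm{flip}(C,\sigma)\ge d$.
   Context: Literals, clauses, CNFs (multisets of clauses), $\mathrm{Var}(\Gamma)$. A substitution $\sigma$ maps each variable to $0$, $1$ or a literal, extended by $\sigma(\lnot x)=\lnot\sigma(x)$, $\sigma(0)=0$, $\sigma(1)=1$; $(\sigma\circ\tau)(x)=\sigma(\tau(x))$. A (partial) assignment has $\sigma(x)\in\{0,1,x\}$; total means all variables get Boolean values. $C{\upharpoonright}_\sigma$: apply $\sigma$ to each literal and simplify; $\sigma\models C$ if the result is $1$ or tautological; $\Gamma{\upharpoonright}_\sigma$ is the multiset of $C{\upharpoonright}_\sigma\neq1$ for $C\in\Gamma$. $\lnot C$ is the partial assignment falsifying all literals of $C$; $\tau\supseteq\rho$ means $\tau$ extends $\rho$. $\Gamma\vdash_1 C$ means unit propagation on $\Gamma{\upharpoonright}_{\lnot C}$ derives the empty clause; $\Gamma\vdash_1\Delta$ means $\Gamma\vdash_1 D$ for all $D\in\Delta$. A MaxSAT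 instance encoded with blocking variables is a CNF $\Gamma=H\cup\{C_1\lor b_1,\dots,C_m\lor b_m\}$ with distinct fresh variables $b_i$ (blocking variables). $\mathrm{cost}(\alpha)=\sum_i\alpha(b_i)$ for total $\alpha$; $\mathrm{cost}(\Gamma)=\min\{\mathrm{cost}(\alpha):\alpha\models\Gamma\}$. A clause $C$ is cost-SR w.r.t. $\Gamma$ via $\sigma$ if (1) $\Gamma{\upharpoonright}_{\lnot C}\vdash_1(\Gamma\cup\{C\}){\upharpoonright}_\sigma$ and (2) $\mathrm{cost}(\tau\circ\sigma)\le\mathrm{cost}(\tau)$ for all total $\tau\supseteq\lnot C$. A derivation in the cost-SR calculus from $\Gamma$ is a sequence $D_1,\dots,D_t$ where each $D_i$ is in $\Gamma$, or follows from earlier clauses by weakening or resolution, or is cost-SR (with an attached witnessing substitution) w.r.t. $\Gamma\cup\{D_1,\dots,D_{i-1}\}$ with $\mathrm{Var}(D_i)\subseteq\mathrm{Var}(\Gamma)$. For a clause $C$ derived by the cost-SR rule with witness $\sigma$, $\mathrm{flip}(C,\sigma)=\max_{\tau\supseteq\lnot C}\mathrm{HD}(\tau,\tau\circ\sigma)$ over total assignments $\tau$, where $\mathrm{HD}$ is the number of variables on which two total assignments differ. *)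

From mathcomp Require Import all_boot.
Set Implicit Arguments.
Unset Strict Implicit.
Unset Printing Implicit Defensive.

(* A literal is a pair (x, s): (x, true) is the variable x, (x, false) is ~x. *)
Definition lit := (nat * bool)%type.
Definition clause := seq lit.
Definition cnf := seq clause.

Definition lneg (l : lit) : lit := (l.1, ~~ l.2).
Definition cvars (C : clause) : seq nat := map fst C.
Definition vars (F : cnf) : seq nat := flatten (map cvars F).

Inductive sval := SConst of bool | SLit of lit.
Definition subst := nat -> sval.

Definition sv_neg (v : sval) : sval :=
  match v with SConst b => SConst (~~ b) | SLit l => SLit (lneg l) end.

Definition subst_lit (s : subst) (l : lit) : sval :=
  if l.2 then s l.1 else sv_neg (s l.1).

Definition is_true_sv (v : sval) : bool :=
  if v is SConst true then true else false.
Definition sv_to_lit (v : sval) : option lit :=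
  if v is SLit l then Some l else None.

(* C|sigma: None stands for the clause 1 (some literal becomes 1, or the
   result is tautological); otherwise the simplified clause (0's removed,
   duplicates removed). *)
Definition clause_restrict (s : subst) (C : clause) : option clause :=
  let vs := map (subst_lit s) C in
  if has is_true_sv vs then None else
  let ls := pmap sv_to_lit vs in
  if has (fun l => lneg l \in ls) ls then None else Some (undup ls).

Definition cnf_restrict (s : subst) (F : cnf) : cnf :=
  pmap (clause_restrict s) F.

Definition negC (C : clause) : subst := fun x =>
  if (x, true) \in C then SConst false
  else if (x, false) \in C then SConst true
  else SLit (x, true).

Definition assign_lit (l : lit) : subst := fun x =>
  if x == l.1 then SConst l.2 else SLit (x, true).

Inductive up_refutes : cnf -> Prop :=
  | UPEmpty (F : cnf) : [::] \in F -> up_refutes F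
  | UPUnit (F : cnf) (l : lit) :
      [:: l] \in F -> up_refutes (cnf_restrict (assign_lit l) F) -> up_refutes F.

Definition implies1 (F : cnf) (D : clause) : Prop :=
  up_refutes (cnf_restrict (negC D) F).

Definition assignment := nat -> bool.

Definition eval_lit (a : assignment) (l : lit) : bool :=
  if l.2 then a l.1 else ~~ a l.1.
Definition sat_clause (a : assignment) (C : clause) : bool := has (eval_lit a) C.
Definition sat_cnf (a : assignment) (F : cnf) : bool := all (sat_clause a) F.

Definition eval_sval (a : assignment) (v : sval) : bool :=
  match v with SConst b => b | SLit l => eval_lit a l end.

Definition compose (t : assignment) (s : subst) : assignment :=
  fun x => eval_sval t (s x).

Definition extends (t : assignment) (rho : subst) : Prop :=
  forall x b, rho x = SConst b -> t x = b.

(* hard = H, soft = [(C_1,b_1); ...; (C_m,b_m)] *)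
Record maxsat := MaxSAT { hard : cnf ; soft : seq (clause * nat) }.

Definition blocking (I : maxsat) : seq nat := map snd (soft I).

Definition formula (I : maxsat) : cnf :=
  hard I ++ [seq rcons p.1 (p.2, true) | p <- soft I].

Definition wf_maxsat (I : maxsat) : Prop :=
  uniq (blocking I) /\
  forall b, b \in blocking I ->
    b \notin vars (hard I) /\ b \notin vars (map fst (soft I)).

Definition cost (I : maxsat) (a : assignment) : nat :=
  \sum_(b <- blocking I) (a b : nat).

Definition min_cost (I : maxsat) (k : nat) : Prop :=
  (exists a, sat_cnf a (formula I) /\ cost I a = k) /\
  (forall a, sat_cnf a (formula I) -> k <= cost I a).

Definition hd (V : seq nat) (a b : assignment) : nat :=
  count (fun x => a x != b x) (undup V).

Definition cost_SR (I : maxsat) (F : cnf) (C : clause) (s : subst) : Prop :=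
  (forall D, D \in cnf_restrict s (F ++ [:: C]) ->
     implies1 (cnf_restrict (negC C) F) D) /\
  (forall t, extends t (negC C) -> cost I (compose t s) <= cost I t).

Inductive rule :=
  | RAxiom
  | RWeak of nat
  | RRes of nat & nat
  | RSR of subst.

Definition step := (clause * rule)%type.

Definition resolvent (D1 D2 D : clause) : Prop :=
  exists x, (x, true) \in D1 /\ (x, false) \in D2 /\
    D =i [pred l | ((l \in D1) && (l != (x, true))) ||
                   ((l \in D2) && (l != (x, false)))].

Definition step_ok (I : maxsat) (prev : cnf) (st : step) : Prop :=
  let: (D, r) := st in
  match r with
  | RAxiom => D \in formula I
  | RWeak j => j < size prev /\ {subset nth [::] prev j <= D}
  | RRes j1 j2 => [/\ j1 < size prev, j2 < size prev &
                     resolvent (nth [::] prev j1) (nth [::] prev j2) D]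
  | RSR s => {subset cvars D <= vars (formula I)} /\
             cost_SR I (formula I ++ prev) D s
  end.

Definition derivation (I : maxsat) (ds : seq step) : Prop :=
  forall i, i < size ds ->
    step_ok I (map fst (take i ds)) (nth ([::], RAxiom) ds i).

Definition is_flip (I : maxsat) (C : clause) (s : subst) (n : nat) : Prop :=
  (exists t, extends t (negC C) /\ hd (vars (formula I)) t (compose t s) = n) /\
  (forall t, extends t (negC C) -> hd (vars (formula I)) t (compose t s) <= n).

Definition in_A (I : maxsat) (k : nat) (a : assignment) : Prop :=
  sat_cnf a (formula I) /\ cost I a = k.

(* membership of a step in a derivation (steps carry functions, so no eqType) *)
Fixpoint step_in (st : step) (ds : seq step) : Prop :=
  match ds with [::] => False | st' :: ds' => st' = st \/ step_in st ds' end.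

(* Weakening and resolution preserve truth in every optimal model alpha (a
   model of Gamma of cost k), and so does a cost-SR step deriving C with
   witness sigma unless alpha falsifies C.  In that case alpha o sigma models
   Gamma and C (by the unit-propagation condition) at cost at most k, so it is
   optimal and differs from alpha on a variable of C; hence
   HD(alpha, alpha o sigma) >= d, and alpha is among the assignments over which
   flip(C, sigma) maximizes.  Without such a step every derived clause would
   hold in the optimal model with alpha(b) = 0, which falsifies the unit b. *)

From Stdlib Require Import Classical.
From mathcomp Require Import all_boot zify.

Set Implicit Arguments.
Unset Strict Implicit.
Unset Printing Implicit Defensive.

Lemma eval_sval_neg (a : assignment) (v : sval) :
  eval_sval a (sv_neg v) = ~~ eval_sval a v.
Proof. by case: v => [c|[x []]] //=; rewrite /eval_lit /= negbK. Qed.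

Lemma eval_lneg (a : assignment) (l : lit) : eval_lit a (lneg l) = ~~ eval_lit a l.
Proof. by case: l => x []; rewrite /eval_lit /= ?negbK. Qed.

Lemma eval_lit_compose (a : assignment) (s : subst) (l : lit) :
  eval_lit (compose a s) l = eval_sval a (subst_lit s l).
Proof. by rewrite /eval_lit /subst_lit /compose; case: l.2; rewrite ?eval_sval_neg. Qed.

Lemma sat_clause_ext (a a' : assignment) (C : clause) :
  a =1 a' -> sat_clause a C = sat_clause a' C.
Proof. by move=> eq_a; apply: eq_has => l; rewrite /eval_lit eq_a. Qed.

Lemma sat_cnf_ext (a a' : assignment) (F : cnf) :
  a =1 a' -> sat_cnf a F = sat_cnf a' F.
Proof. by move=> eq_a; apply: eq_all => C; apply: sat_clause_ext. Qed.

Lemma sat_cnf_cat (a : assignment) (F G : cnf) :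
  sat_cnf a (F ++ G) = sat_cnf a F && sat_cnf a G.
Proof. exact: all_cat. Qed.

Lemma sat_clause_subset (a : assignment) (C D : clause) :
  {subset C <= D} -> sat_clause a C -> sat_clause a D.
Proof. by move=> sub_CD /hasP[l /sub_CD D_l a_l]; apply/hasP; exists l. Qed.

Lemma sat_clause_resolvent (a : assignment) (D1 D2 D : clause) :
  resolvent D1 D2 D -> sat_clause a D1 -> sat_clause a D2 -> sat_clause a D.
Proof.
move=> [x [D1_x [D2_nx eq_D]]] /hasP[l1 D1_l1 a_l1] /hasP[l2 D2_l2 a_l2].
apply/hasP; case a_x: (a x).
- exists l2 => //; rewrite eq_D inE D2_l2; apply/orP; right.
  by move: a_l2; apply: contraTneq => ->; rewrite /eval_lit /= a_x.
- exists l1 => //; rewrite eq_D inE D1_l1; apply/orP; left.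
  by move: a_l1; apply: contraTneq => ->; rewrite /eval_lit /= a_x.
Qed.

Lemma sat_clause_differ (a a' : assignment) (C : clause) :
  sat_clause a' C -> ~~ sat_clause a C -> exists2 x, x \in cvars C & a x != a' x.
Proof.
move=> /hasP[l C_l a'_l] /hasPn/(_ l C_l) a_l.
exists l.1; first exact: map_f.
by apply: contraNneq a_l => eq_x; rewrite /eval_lit eq_x.
Qed.

Lemma has_true_sv_eval (a : assignment) (vs : seq sval) :
  has is_true_sv vs -> has (eval_sval a) vs.
Proof. by apply: sub_has => -[[]|]. Qed.

Lemma has_eval_sval_lits (a : assignment) (vs : seq sval) :
  ~~ has is_true_sv vs -> has (eval_sval a) vs = has (eval_lit a) (pmap sv_to_lit vs).
Proof. by elim: vs => //= -[[]|l] vs IH //= /IH ->. Qed.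

Lemma has_complementary_sat (a : assignment) (ls : seq lit) :
  has (fun l => lneg l \in ls) ls -> has (eval_lit a) ls.
Proof.
move=> /hasP[l ls_l ls_nl]; apply/hasP.
by case a_l: (eval_lit a l); [exists l | exists (lneg l); rewrite ?eval_lneg ?a_l].
Qed.

Lemma sat_clause_compose (a : assignment) (s : subst) (C : clause) :
  sat_clause (compose a s) C = oapp (sat_clause a) true (clause_restrict s C).
Proof.
have -> : sat_clause (compose a s) C = has (eval_sval a) (map (subst_lit s) C).
  by rewrite has_map; apply: eq_has => l; rewrite /= eval_lit_compose.
rewrite /clause_restrict; case: ifP => [|no_true]; first exact: has_true_sv_eval.
rewrite has_eval_sval_lits ?no_true //.
by case: ifP => [|_]; [apply: has_complementary_sat | rewrite /= /sat_clause has_undup].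
Qed.

Lemma sat_cnf_compose (a : assignment) (s : subst) (F : cnf) :
  sat_cnf (compose a s) F = sat_cnf a (cnf_restrict s F).
Proof.
elim: F => //= C F IH; rewrite /cnf_restrict /= sat_clause_compose IH.
by case: (clause_restrict s C).
Qed.

Definition partial_assignment (rho : subst) : Prop :=
  forall x, rho x = SLit (x, true) \/ exists c, rho x = SConst c.

Lemma compose_extends (a : assignment) (rho : subst) :
  partial_assignment rho -> extends a rho -> compose a rho =1 a.
Proof.
move=> rho_pa a_rho x; rewrite /compose.
by case: (rho_pa x) => [-> //|[c rho_x]]; rewrite rho_x (a_rho _ _ rho_x).
Qed.

Lemma sat_cnf_restrict_extends (a : assignment) (rho : subst) (F : cnf) :
  partial_assignment rho -> extends a rho ->
  sat_cnf a (cnf_restrict rho F) = sat_cnf a F.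
Proof. by move=> rho_pa a_rho; rewrite -sat_cnf_compose; apply/sat_cnf_ext/compose_extends. Qed.

Lemma partial_assignment_negC (C : clause) : partial_assignment (negC C).
Proof. by move=> x; rewrite /negC; do 2?case: ifP => _; by [left | right; eexists]. Qed.

Lemma extends_negC (a : assignment) (C : clause) :
  ~~ sat_clause a C -> extends a (negC C).
Proof.
move=> /hasPn a_C x c; rewrite /negC.
case: ifP => [/a_C /negbTE <- [<-] //|_].
by case: ifP => [/a_C /negPn <- [<-] //|].
Qed.

Lemma partial_assignment_assign_lit (l : lit) : partial_assignment (assign_lit l).
Proof. by move=> x; rewrite /assign_lit; case: ifP => _; by [right; eexists | left]. Qed.

Lemma extends_assign_lit (a : assignment) (l : lit) :
  eval_lit a l -> extends a (assign_lit l).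
Proof.
case: l => y [] a_l x c; rewrite /assign_lit /=; case: eqP => // -> [<-] //.
exact: negbTE.
Qed.

Lemma up_refutes_unsat (F : cnf) (a : assignment) : up_refutes F -> ~~ sat_cnf a F.
Proof.
move=> up_F; elim: up_F => [G G_nil|G l G_l _ IH]; first by apply/allPn; exists [::].
apply: contra IH => a_G; have a_l : eval_lit a l by have /= := allP a_G _ G_l; rewrite orbF.
rewrite sat_cnf_restrict_extends //; first exact: partial_assignment_assign_lit.
exact: extends_assign_lit.
Qed.

Lemma implies1_sound (F : cnf) (C : clause) (a : assignment) :
  implies1 F C -> sat_cnf a F -> sat_clause a C.
Proof.
move=> /(up_refutes_unsat a) a_unsat a_F; apply: contraNT a_unsat => a_C.
by rewrite sat_cnf_restrict_extends //; [apply: partial_assignment_negC | apply: extends_negC].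
Qed.

Lemma cost_SR_sound (I : maxsat) (F : cnf) (C : clause) (s : subst) (a : assignment) :
  cost_SR I F C s -> sat_cnf a F -> ~~ sat_clause a C ->
  sat_cnf (compose a s) (F ++ [:: C]) /\ cost I (compose a s) <= cost I a.
Proof.
move=> [implied_restr cost_le] a_F a_C; split; last exact/cost_le/extends_negC.
rewrite sat_cnf_compose; apply/allP => D /implied_restr /implies1_sound; apply.
by rewrite sat_cnf_restrict_extends //; [apply: partial_assignment_negC | apply: extends_negC].
Qed.

Lemma bounded_exists_max (P : nat -> Prop) (M n0 : nat) :
  P n0 -> (forall n, P n -> n <= M) ->
  exists2 n, n0 <= n & P n /\ forall m, P m -> m <= n.
Proof.
move=> P_n0 P_le; apply: NNPP => no_max.
have grow j : exists2 n, n0 + j <= n & P n.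
  elim: j => [|j [n le_n P_n]]; first by exists n0; rewrite ?addn0.
  apply: NNPP => no_larger; apply: no_max; exists n; first lia.
  split=> // m P_m; rewrite leqNgt; apply/negP => lt_nm.
  by apply: no_larger; exists m; first lia.
by have [n le_n /P_le] := grow M.+1; lia.
Qed.

Lemma exists_is_flip (I : maxsat) (C : clause) (s : subst) (t0 : assignment) :
  extends t0 (negC C) ->
  exists2 n, is_flip I C s n & hd (vars (formula I)) t0 (compose t0 s) <= n.
Proof.
move=> t0_C; pose P n := exists t, extends t (negC C) /\
  hd (vars (formula I)) t (compose t s) = n.
have P_le n : P n -> n <= size (undup (vars (formula I))).
  by move=> [t [_ <-]]; apply: count_size.
have [n le_n [P_n n_max]] :=
  @bounded_exists_max P _ _ (ex_intro _ t0 (conj t0_C erefl)) P_le.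
by exists n => //; split=> // t t_C; apply: n_max; exists t.
Qed.

Lemma step_in_rcons (st st' : step) (ds : seq step) :
  step_in st (rcons ds st') <-> step_in st ds \/ st' = st.
Proof. by elim: ds => [|st'' ds IH] /=; rewrite ?IH; intuition. Qed.

Lemma step_in_clause (D : clause) (r : rule) (ds : seq step) :
  step_in (D, r) ds -> D \in map fst ds.
Proof. by elim: ds => //= -[D' r'] ds IH [[-> _]|/IH]; rewrite inE ?eqxx // orbC => ->. Qed.

Lemma derivation_rcons (I : maxsat) (ds : seq step) (st : step) :
  derivation I (rcons ds st) -> derivation I ds /\ step_ok I (map fst ds) st.
Proof.
move=> der; split; last first.
  have := der (size ds); rewrite size_rcons ltnSn => /(_ isT).
  by rewrite nth_rcons ltnn eqxx -cats1 take_size_cat.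
move=> i lt_i; have := der i; rewrite size_rcons ltnS (ltnW lt_i) => /(_ isT).
by rewrite nth_rcons lt_i -cats1 takel_cat // ltnW.
Qed.

Definition far_SR_step (I : maxsat) (d : nat) (ds : seq step) : Prop :=
  exists C s, step_in (C, RSR s) ds /\ exists n, is_flip I C s n /\ d <= n.

Section OptimalModels.

Variables (I : maxsat) (k d : nat).
Hypothesis cost_I : min_cost I k.
Hypothesis optimal_far : forall a1 a2, in_A I k a1 -> in_A I k a2 ->
  (exists2 x, x \in vars (formula I) & a1 x != a2 x) ->
  d <= hd (vars (formula I)) a1 a2.

Lemma cost_SR_falsified_flip (prev : cnf) (C : clause) (s : subst) (a : assignment) :
  in_A I k a -> sat_cnf a prev ->
  {subset cvars C <= vars (formula I)} -> cost_SR I (formula I ++ prev) C s ->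
  ~~ sat_clause a C -> exists n, is_flip I C s n /\ d <= n.
Proof.
move=> [a_I cost_a] a_prev C_vars C_SR a_C.
have a_Iprev : sat_cnf a (formula I ++ prev) by rewrite sat_cnf_cat a_I.
have [] := cost_SR_sound C_SR a_Iprev a_C.
rewrite -catA sat_cnf_cat (sat_cnf_cat _ prev) /= andbT => /and3P[as_I _ as_C] cost_as.
have as_opt : in_A I k (compose a s).
  by split=> //; have := cost_I.2 _ as_I; lia.
have [x C_x a_x] := sat_clause_differ as_C a_C.
have far := optimal_far (conj a_I cost_a) as_opt (ex_intro2 _ _ x (C_vars x C_x) a_x).
have [n flip_n hd_le] := exists_is_flip I s (extends_negC a_C).
by exists n; split=> //; apply: leq_trans hd_le.
Qed.

Lemma step_ok_optimal (prev : cnf) (D : clause) (r : rule) (a : assignment) :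
  step_ok I prev (D, r) -> in_A I k a -> sat_cnf a prev ->
  (exists s, r = RSR s /\ exists n, is_flip I D s n /\ d <= n) \/ sat_clause a D.
Proof.
move=> ok a_opt a_prev; have a_nth j : j < size prev -> sat_clause a (nth [::] prev j).
  by move=> lt_j; apply: (allP a_prev); apply: mem_nth.
case: r ok => [|j|j1 j2|s] /=.
- by move=> D_I; right; apply: (allP a_opt.1).
- by move=> [lt_j sub_D]; right; apply: sat_clause_subset sub_D (a_nth j lt_j).
- move=> [lt_j1 lt_j2 res]; right.
  exact: sat_clause_resolvent res (a_nth j1 lt_j1) (a_nth j2 lt_j2).
- move=> [D_vars D_SR]; case: (boolP (sat_clause a D)) => a_D; first by right.
  left; exists s; split=> //.
  exact: cost_SR_falsified_flip a_opt a_prev D_vars D_SR a_D.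
Qed.

Lemma derivation_optimal_sat (ds : seq step) (a : assignment) :
  derivation I ds -> in_A I k a -> far_SR_step I d ds \/ sat_cnf a (map fst ds).
Proof.
move=> + a_opt; elim/last_ind: ds => [|ds [D r] IH]; first by right.
move=> /derivation_rcons[/IH [[C [s [in_ds far]]]|a_ds] ok].
  by left; exists C, s; split=> //; apply/step_in_rcons; left.
have [[s [-> far]]|a_D] := step_ok_optimal ok a_opt a_ds.
  by left; exists D, s; split=> //; apply/step_in_rcons; right.
by right; rewrite map_rcons /sat_cnf all_rcons a_D.
Qed.

End OptimalModels.

Theorem theorem5p1 (I : maxsat) (k d : nat) (ds : seq step) (b : nat) :
  wf_maxsat I ->
  min_cost I k ->
  (forall a1 a2, in_A I k a1 -> in_A I k a2 ->
     (exists2 x, x \in vars (formula I) & a1 x != a2 x) ->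
     d <= hd (vars (formula I)) a1 a2) ->
  (forall b', b' \in blocking I ->
     exists a1 a2, [/\ in_A I k a1, in_A I k a2, a1 b' = false & a2 b' = true]) ->
  derivation I ds ->
  b \in blocking I ->
  (exists D r, step_in (D, r) ds /\ D =i [:: (b, true)]) ->
  exists C s, step_in (C, RSR s) ds /\ exists n, is_flip I C s n /\ d <= n.
Proof.
move=> _ cost_I optimal_far both_values der b_blocking [D [r [D_in eq_D]]].
have [a [_ [a_opt _ a_b _]]] := both_values b b_blocking.
have [//|a_ds] := derivation_optimal_sat cost_I optimal_far der a_opt.
have /hasP[l] := allP a_ds D (step_in_clause D_in).
by rewrite eq_D inE => /eqP ->; rewrite /eval_lit /= a_b.
Qed.
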